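(* Let $E$ be a regular biordered set satisfying (E1), (E2), (E3) below, let $e,f\in E$ with $f\,\omega\,e'$, and let $h=e\oplus f$. Then: (i) $e\,\omega\,h$ and $f\,\omega\,h$; (ii) if $g\in E$ satisfies $e\,\omega^l\,g$ and $f\,\omega^l\,g$, then $h\,\omega^l\,g$; (iii) if $g\in E$ satisfies $e\,\omega^r\,g$ and $f\,\omega^r\,g$, then $h\,\omega^r\,g$. Moreover, $h$ is the unique element of $E$ satisfying (i)–(iii). Conditions: (E1) there exists $0\in E$ with $0\,\omega\,x$ for every $x\in E$; (E2) there is a map $x\mapsto x'$ on $E$ such that for all $x,y\in E$: $(x')'=x$; $y\,\omega^l\,x$ iff $x'\,\omega^r\,y'$; $y\,\omega^l\,x'$ iff $M(y,x)=\{0\}$; (E3) for all $x,y\in E$, if $y\,\omega\,x'$ then $S(x',y')\cap S(y',x')\ne\emptyset$.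
   Context: A regular biordered set is a partial algebra isomorphic to the set of idempotents $E(S)$ of a regular semigroup $S$ (regular: every $x$ has $y$ with $xyx=x$), where $ef$ (computed in $S$) is defined when $\{ef,fe\}\cap\{e,f\}\ne\emptyset$. In $E$: $\omega^l=\{(e,f): ef=e\}$, $\omega^r=\{(e,f): fe=e\}$, $\omega=\omega^l\cap\omega^r$; $M(e,f)=\{g\in E: g\,\omega^l\,e,\ g\,\omega^r\,f\}$; for $g,h\in M(e,f)$, $g\preceq h$ iff $eg\,\omega^r\,eh$ and $gf\,\omega^l\,hf$; $S(e,f)=\{h\in M(e,f): g\preceq h\text{ for all }g\in M(e,f)\}$. Under (E1)–(E3), for $f\,\omega\,e'$ the set $S(e',f')\cap S(f',e')$ has exactly one element $k$, and $e\oplus f$ is defined to be $k'$. *)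

(* A regular biordered set is (up to isomorphism)
   the set E(S) of idempotents of a regular semigroup S; we therefore work
   with an arbitrary regular semigroup (T, mul) and its idempotents. *)

Set Implicit Arguments.
Section Biorder.
Context {T : Type}.
Variable mul : T -> T -> T.

Definition associative := forall x y z, mul x (mul y z) = mul (mul x y) z.
Definition regular := forall x, exists y, mul (mul x y) x = x.

Definition idem (e : T) := mul e e = e.

Definition wl (e f : T) := mul e f = e.
Definition wr (e f : T) := mul f e = e.
Definition w (e f : T) := wl e f /\ wr e f.

Definition Mset (e f g : T) := idem g /\ wl g e /\ wr g f.

Definition prec (e f g h : T) :=
  wr (mul e g) (mul e h) /\ wl (mul g f) (mul h f).

Definition Sset (e f h : T) :=
  Mset e f h /\ forall g, Mset e f g -> prec e f g h.

Definition E1 (z : T) := idem z /\ forall x, idem x -> w z x.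

Definition E2 (z : T) (p : T -> T) :=
  (forall x, idem x -> idem (p x)) /\
  (forall x y, idem x -> idem y ->
     p (p x) = x /\
     (wl y x <-> wr (p x) (p y)) /\
     (wl y (p x) <-> (forall g, Mset y x g <-> g = z))).

Definition E3 (p : T -> T) :=
  forall x y, idem x -> idem y -> w y (p x) ->
    exists k, Sset (p x) (p y) k /\ Sset (p y) (p x) k.

End Biorder.

From Stdlib Require Import Setoid.

Set Implicit Arguments.

(* The involution ' reverses ω^l and ω^r, so conditions (i)-(iii) on
   h = k' are equivalent to dual conditions on k ∈ S(e',f') ∩ S(f',e'),
   which lies ω-below e' and f'.  The dual statement says that k is the
   greatest common ω^r- (and ω^l-) lower bound of e' and f': if g ω^r e' and
   g ω^r f', then g e' ∈ M(e',f'), and g e' ⪯ k gives k g e' = g e'; multiplying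
   by g on the right yields k g = g (symmetrically with f' g for ω^l).
   Uniqueness is the antisymmetry of ω. *)

Section Semigroup.

Variable T : Type.
Variable mul : T -> T -> T.
Hypothesis assoc : associative mul.

Lemma wl_wr_eq (x y : T) : wl mul x y -> wr mul y x -> x = y.
Proof. unfold wl, wr. congruence. Qed.

Lemma Sset_wr_greatest (a b k g : T) :
  idem mul a -> idem mul g -> Sset mul a b k -> wr mul k a ->
  wr mul g a -> wr mul g b -> wr mul g k.
Proof.
  unfold wr, idem. intros ha hg [_ hmax] hka hga hgb.
  assert (hM : Mset mul a b (mul g a)).
  { unfold Mset, idem, wl, wr. repeat split.
    - rewrite <- assoc, (assoc a g a), hga, assoc, hg. reflexivity.
    - rewrite <- assoc, ha. reflexivity.
    - rewrite assoc, hgb. reflexivity. }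
  destruct (hmax _ hM) as [hprec _]. unfold wr in hprec.
  rewrite hka, (assoc a g a), hga in hprec.
  assert (hkg : mul (mul k (mul g a)) g = mul (mul g a) g) by (rewrite hprec; reflexivity).
  rewrite <- !assoc, hga, hg in hkg. exact hkg.
Qed.

Lemma Sset_wl_greatest (a b k g : T) :
  idem mul b -> idem mul g -> Sset mul a b k -> wl mul k b ->
  wl mul g a -> wl mul g b -> wl mul g k.
Proof.
  unfold wl, idem. intros hb hg [_ hmax] hkb hga hgb.
  assert (hM : Mset mul a b (mul b g)).
  { unfold Mset, idem, wl, wr. repeat split.
    - rewrite <- assoc, (assoc g b g), hgb, hg. reflexivity.
    - rewrite <- assoc, hga. reflexivity.
    - rewrite assoc, hb. reflexivity. }
  destruct (hmax _ hM) as [_ hprec]. unfold wl in hprec.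
  rewrite hkb, <- (assoc b g b), hgb in hprec.
  assert (hgk : mul g (mul (mul b g) k) = mul g (mul b g)) by (rewrite hprec; reflexivity).
  rewrite !assoc, hgb, hg in hgk. exact hgk.
Qed.

End Semigroup.

Section Involution.

Variable T : Type.
Variable mul : T -> T -> T.
Variables (z : T) (p : T -> T).
Hypothesis hp : E2 mul z p.

Lemma idem_p (x : T) : idem mul x -> idem mul (p x).
Proof. exact (proj1 hp x). Qed.

Lemma p_involutive (x : T) : idem mul x -> p (p x) = x.
Proof. intros hx. exact (proj1 (proj2 hp x x hx hx)). Qed.

Lemma wl_p (x y : T) : idem mul x -> idem mul y -> (wl mul x y <-> wr mul (p y) (p x)).
Proof. intros hx hy. exact (proj1 (proj2 (proj2 hp y x hy hx))). Qed.

Lemma wr_p (x y : T) : idem mul x -> idem mul y -> (wr mul x y <-> wl mul (p y) (p x)).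
Proof.
  intros hx hy.
  rewrite (wl_p (idem_p hy) (idem_p hx)), !p_involutive by assumption.
  reflexivity.
Qed.

Lemma w_p (x y : T) : idem mul x -> idem mul y -> (w mul x y <-> w mul (p y) (p x)).
Proof.
  intros hx hy. unfold w. rewrite (wl_p hx hy), (wr_p hx hy). tauto.
Qed.

End Involution.

Theorem proposition5p3 (T : Type) (mul : T -> T -> T)
  (Hassoc : associative mul) (Hreg : regular mul)
  (z : T) (p : T -> T)
  (HE1 : E1 mul z) (HE2 : E2 mul z p) (HE3 : E3 mul p)
  (e f : T) (he : idem mul e) (hf : idem mul f) (hfe : w mul f (p e))
  (k : T) (hk1 : Sset mul (p e) (p f) k) (hk2 : Sset mul (p f) (p e) k)
  (h : T) (hh : h = p k) :
  (* (i) *)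
  (w mul e h /\ w mul f h) /\
  (* (ii) *)
  (forall g, idem mul g -> wl mul e g -> wl mul f g -> wl mul h g) /\
  (* (iii) *)
  (forall g, idem mul g -> wr mul e g -> wr mul f g -> wr mul h g) /\
  (* uniqueness *)
  (forall h', idem mul h' ->
     (w mul e h' /\ w mul f h') ->
     (forall g, idem mul g -> wl mul e g -> wl mul f g -> wl mul h' g) ->
     (forall g, idem mul g -> wr mul e g -> wr mul f g -> wr mul h' g) ->
     h' = h).
Proof.
  pose proof hk1 as [[hk [hk_le hk_rf]] _].
  destruct hk2 as [[_ [hk_lf hk_re]] _].
  assert (hpk : p (p k) = k) by exact (p_involutive HE2 hk).
  assert (hh_idem : idem mul h) by (subst h; exact (idem_p HE2 hk)).
  assert (hI : w mul e h /\ w mul f h).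
  { split; apply (w_p HE2); auto; subst h; rewrite hpk; split; assumption. }
  assert (hII : forall g, idem mul g -> wl mul e g -> wl mul f g -> wl mul h g).
  { intros g hg heg hfg.
    apply (wl_p HE2) in heg, hfg; auto. apply (wl_p HE2); auto. subst h. rewrite hpk.
    exact (Sset_wr_greatest Hassoc (idem_p HE2 he) (idem_p HE2 hg) hk1 hk_re heg hfg). }
  assert (hIII : forall g, idem mul g -> wr mul e g -> wr mul f g -> wr mul h g).
  { intros g hg heg hfg.
    apply (wr_p HE2) in heg, hfg; auto. apply (wr_p HE2); auto. subst h. rewrite hpk.
    exact (Sset_wl_greatest Hassoc (idem_p HE2 hf) (idem_p HE2 hg) hk1 hk_lf heg hfg). }
  split; [exact hI | split; [exact hII | split; [exact hIII |]]].
  intros h' hh' [[_ her'] [_ hfr']] hII' _.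
  destruct hI as [[hel her] [hfl hfr]].
  apply (wl_wr_eq (mul := mul)).
  - apply hII'; assumption.
  - apply hIII; assumption.
Qed.
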